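(* In the setting below, the bi-orthogonal polynomials satisfy the recursion relations $$A\widehat p^{(1)}=z^aB\widehat p^{(1)},\qquad B^Th^{-1}p^{(2)}=z^bA^Th^{-1}p^{(2)} .$$
   Context: Let $a,b\geq1$ and let $\mu=(\mu_{ij})_{i,j\ge0}$ be a semi-infinite complex matrix with $\mu_{i+a,j+b}=\mu_{ij}$; set $\widehat\mu_{ij}=\mu_{i,j+b}$, and define bilinear forms on $\mathbb C[z]$ by $\langle z^i,z^j\rangle_\mu=\mu_{ij}$, $\langle z^i,z^j\rangle_{\widehat\mu}=\widehat\mu_{ij}$. Let $p^{(1)}_j,p^{(2)}_j,\widehat p^{(1)}_j,\widehat p^{(2)}_j$ ($j\ge0$) be monic polynomials of degree $j$ with $\langle p^{(1)}_i,p^{(2)}_j\rangle_\mu=\delta_{ij}h_i$, $\langle \widehat p^{(1)}_i,\widehat p^{(2)}_j\rangle_{\widehat\mu}=\delta_{ij}\widehat h_i$ (all $h_i,\widehat h_i\neq0$). Let $S_1,S_2$ be semi-infinite matrices with $p^{(1)}_i(z)=\sum_{k=0}^i(S_1)_{ik}z^k$, $p^{(2)}_i(z)=h_i\sum_{k=0}^i(S_2^{-1})_{ki}z^k$, and $\widehat S_1,\widehat S_2$ defined analogously from $\widehat p^{(1)},\widehat p^{(2)},\widehat h$. Here $\Lambda$ is the semi-infinite matrix $\Lambda_{ij}=\delta_{i+1,j}$ and $\Lambda^{-1}$ its transpose. Assume $S_1\Lambda^a\widehat S_1^{-1}=S_2\widehat S_2^{-1}=:A$ and $S_1\widehat S_1^{-1}=S_2\Lambda^{-b}\widehat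 S_2^{-1}=:B$. $p^{(i)}$, $\widehat p^{(i)}$ denote the column vectors with $j$-th entries $p^{(i)}_j$, $\widehat p^{(i)}_j$; $h=\mathrm{diag}(h_j)$; ${}^T$ is transpose. *)

From HB Require Import structures.
From mathcomp Require Import all_boot all_order all_algebra.
From mathcomp Require Import boolp classical_sets fsbigop reals.
From mathcomp Require Import complex.
Set Implicit Arguments. Unset Strict Implicit. Unset Printing Implicit Defensive.
Import Order.TTheory GRing.Theory Num.Theory.
Local Open Scope ring_scope.
Local Open Scope classical_set_scope.

Section SemiInfinite.
Variable C : fieldType.

Definition smx := nat -> nat -> C.

(* product of semi-infinite matrices: (A B)_{ij} = sum_k A_{ik} B_{kj};
   this is a finite-support sum (all products occurring below only involve
   finitely many nonzero terms). *)
Definition smul (A B : smx) : smx :=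
  fun i j => \sum_(k \in [set: nat]) A i k * B k j.

Definition sid : smx := fun i j => (i == j)%:R.

Definition strT (A : smx) : smx := fun i j => A j i.

Definition spow (A : smx) (n : nat) : smx := iter n (smul A) sid.

(* shift matrix Lambda_{ij} = delta_{i+1,j}; Lambda^{-1} is its transpose *)
Definition sLam : smx := fun i j => (i.+1 == j)%:R.

Definition lower_tri (A : smx) := forall i j, (i < j)%N -> A i j = 0.
Definition upper_tri (A : smx) := forall i j, (j < i)%N -> A i j = 0.

Definition smulv (A : smx) (v : nat -> {poly C}) : nat -> {poly C} :=
  fun i => \sum_(j \in [set: nat]) (A i j *: v j).

Definition bform (mu : smx) (p q : {poly C}) : C :=
  \sum_(i < size p) \sum_(j < size q) p`_i * q`_j * mu i j.

Definition monic_deg (p : {poly C}) (j : nat) := p \is monic /\ size p = j.+1.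

Definition S1_of (p1 : nat -> {poly C}) : smx := fun i k => (p1 i)`_k.

(* S_2^{-1} from p^(2), h: p^(2)_i = h_i sum_k (S_2^{-1})_{ki} z^k *)
Definition S2inv_of (p2 : nat -> {poly C}) (h : nat -> C) : smx :=
  fun k i => (p2 i)`_k / h i.

End SemiInfinite.

From HB Require Import structures.
From mathcomp Require Import all_boot all_order all_algebra.
From mathcomp Require Import zify.
From mathcomp Require Import boolp classical_sets fsbigop reals.
From mathcomp Require Import complex.
Import Order.TTheory GRing.Theory Num.Theory.
Local Open Scope ring_scope.
Local Open Scope classical_set_scope.

(* Write v for the monomial vector (z^k)_k, so that p^(1) = S1 v and p̂^(1) = Ŝ1 v.
   As Ŝ1^{-1} and Ŝ1 are lower triangular with Ŝ1^{-1} Ŝ1 = 1, all sums stay finite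
   and Ŝ1^{-1} p̂^(1) = v; hence S1 Λ^c Ŝ1^{-1} p̂^(1) = S1 (z^(k+c))_k = z^c p^(1).
   Taking c = a and c = 0 gives A p̂^(1) = z^a p^(1) and B p̂^(1) = p^(1).
   Transposing the other two factorisations, S2^T is a lower triangular inverse of
   the coefficient matrix of h^{-1} p^(2), and the same computation gives
   B^T h^{-1} p^(2) = z^b ĥ^{-1} p̂^(2) and A^T h^{-1} p^(2) = ĥ^{-1} p̂^(2). *)

Lemma fsbig_setT_ord {V : nmodType} N (F : nat -> V) :
  (forall k, (N <= k)%N -> F k = 0) ->
  \sum_(k \in [set: nat]) F k = \sum_(k < N) F k.
Proof.
move=> FN; rewrite fsbig_ord (fsbig_widen `I_N setT) // => k [_ /= kN].
by apply: FN; rewrite leqNgt; apply/negP.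
Qed.

Lemma fsbig_setT1 {V : nmodType} k0 (F : nat -> V) :
  (forall k, k != k0 -> F k = 0) -> \sum_(k \in [set: nat]) F k = F k0.
Proof.
move=> Fk0; rewrite (fsbig_setT_ord k0.+1) => [|k k0k]; last first.
  by apply: Fk0; rewrite neq_ltn k0k orbT.
rewrite big_ord_recr /= big1 ?add0r // => k _.
by apply: Fk0; rewrite neq_ltn ltn_ord.
Qed.

Section SemiInfiniteAction.
Variable C : fieldType.
Implicit Types (M H V : smx C) (p q v : nat -> {poly C}).

Lemma spow_sLamE c i j : spow (sLam C) c i j = ((i + c)%N == j)%:R.
Proof.
elim: c i j => [|c IHc] i j; first by rewrite addn0.
rewrite /spow iterS -/(spow _ c) /smul (fsbig_setT1 i.+1) => [|k ik].
  by rewrite /sLam eqxx mul1r IHc addSnnS.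
by rewrite /sLam eq_sym (negbTE ik) mul0r.
Qed.

Lemma smul_sid M : smul M (sid C) = M.
Proof.
apply/funext => i; apply/funext => j; rewrite /smul (fsbig_setT1 j) => [|k kj].
  by rewrite /sid eqxx mulr1.
by rewrite /sid (negbTE kj) mulr0.
Qed.

Lemma strT_sid : strT (sid C) = sid C.
Proof. by apply/funext => i; apply/funext => j; rewrite /strT /sid eq_sym. Qed.

Lemma strT_smul M H : strT (smul M H) = smul (strT H) (strT M).
Proof.
apply/funext => i; apply/funext => j.
by apply: eq_fsbigr => k _; rewrite /strT mulrC.
Qed.

Lemma smulv_sid v k : smulv (sid C) v k = v k.
Proof.
rewrite /smulv (fsbig_setT1 k) => [|j kj]; first by rewrite /sid eqxx scale1r.
by rewrite /sid eq_sym (negbTE kj) scale0r.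
Qed.

Lemma smulv_spow_sLam c v k : smulv (spow (sLam C) c) v k = v (k + c)%N.
Proof.
rewrite /smulv (fsbig_setT1 (k + c)) => [|j jkc]; first by rewrite spow_sLamE eqxx scale1r.
by rewrite spow_sLamE eq_sym (negbTE jkc) scale0r.
Qed.

Lemma smul_spow_sLamE c M k j : smul (spow (sLam C) c) M k j = M (k + c)%N j.
Proof.
rewrite /smul (fsbig_setT1 (k + c)) => [|l lkc]; first by rewrite spow_sLamE eqxx mul1r.
by rewrite spow_sLamE eq_sym (negbTE lkc) mul0r.
Qed.

Lemma smulv_smul_spow_sLam c M v k :
  smulv (smul (spow (sLam C) c) M) v k = smulv M v (k + c)%N.
Proof. by apply: eq_fsbigr => j _; rewrite smul_spow_sLamE. Qed.

(* The bounded supports make every sum finite, so the sums can be exchanged. *)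
Lemma smulv_smul N N' M H v i :
  (forall k, (N <= k)%N -> M i k = 0) ->
  (forall k j, (k < N)%N -> (N' <= j)%N -> H k j = 0) ->
  smulv (smul M H) v i = smulv M (smulv H v) i.
Proof.
move=> Mi HN; have MHi j : smul M H i j = \sum_(k < N) M i k * H k j.
  by rewrite /smul (fsbig_setT_ord N) // => k /Mi ->; rewrite mul0r.
rewrite /smulv (fsbig_setT_ord N') => [|j jN']; last first.
  by rewrite MHi big1 ?scale0r // => k _; rewrite HN ?mulr0.
rewrite (fsbig_setT_ord N) => [|k /Mi ->]; last by rewrite scale0r.
under eq_bigr do rewrite MHi scaler_suml.
rewrite exchange_big /=; apply: eq_bigr => k _.
rewrite (fsbig_setT_ord N') => [|j jN']; last by rewrite HN ?scale0r.
by rewrite scaler_sumr; apply: eq_bigr => j _; rewrite scalerA.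
Qed.

Lemma smulv_lower_inverse H V v k :
  lower_tri H -> lower_tri V -> smul H V = sid C ->
  smulv H (smulv V v) k = v k.
Proof.
move=> lH lV HV; rewrite -(smulv_smul k.+1 k.+1) ?HV ?smulv_sid // => [j|j l].
  exact: lH.
by move=> jk kl; apply: lV; apply: leq_trans kl.
Qed.

Lemma lower_tri_S1_of p : (forall j, size (p j) <= j.+1)%N -> lower_tri (S1_of p).
Proof. by move=> sp j k jk; rewrite /S1_of nth_default // (leq_trans (sp j)). Qed.

Lemma smulv_S1_of_shiftX c p i :
  smulv (S1_of p) (fun k => 'X^(k + c)) i = 'X^c * p i.
Proof.
rewrite /smulv (fsbig_setT_ord (size (p i))) => [|k ik]; last first.
  by rewrite /S1_of nth_default ?scale0r.
have -> : 'X^c * p i = \sum_(k < size (p i)) 'X^c * ((p i)`_k *: 'X^k).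
  by rewrite -mulr_sumr -poly_def coefK.
by apply: eq_bigr => k _; rewrite -scalerAr -exprD addnC.
Qed.

Lemma smulv_S1_of_inverse H q k :
  (forall j, size (q j) <= j.+1)%N -> lower_tri H -> smul H (S1_of q) = sid C ->
  smulv H q k = 'X^k.
Proof.
move=> sq lH Hq; have -> : q = smulv (S1_of q) (fun m => 'X^(m + 0)).
  by apply/funext => j; rewrite smulv_S1_of_shiftX mul1r.
by rewrite smulv_lower_inverse ?addn0 //; exact: lower_tri_S1_of.
Qed.

Lemma strT_S2inv_of p (h : nat -> C) :
  strT (S2inv_of p h) = S1_of (fun j => (h j)^-1 *: p j).
Proof.
by apply/funext => j; apply/funext => k; rewrite /strT /S2inv_of /S1_of coefZ mulrC.
Qed.

Lemma smulv_S1_shift_inverse c p q H i :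
  (forall j, size (p j) <= j.+1)%N -> (forall j, size (q j) <= j.+1)%N ->
  lower_tri H -> smul H (S1_of q) = sid C ->
  smulv (smul (smul (S1_of p) (spow (sLam C) c)) H) q i = 'X^c * p i.
Proof.
move=> sp sq lH Hq.
have S1Lam_row k : (i + c < k)%N -> smul (S1_of p) (spow (sLam C) c) i k = 0.
  move=> ick; rewrite /smul fsbig1 // => l _; rewrite spow_sLamE.
  have [il|li] := ltnP i l; first by rewrite (lower_tri_S1_of _ sp) ?mul0r.
  by rewrite (_ : (l + c == k)%N = false) ?mulr0 //; apply/negbTE; lia.
rewrite (smulv_smul (i + c).+1 (i + c).+1) // => [|k j kic icj]; last first.
  by apply: lH; apply: leq_trans icj.
have -> : smulv H q = fun k => 'X^k.
  by apply/funext => k; apply: smulv_S1_of_inverse.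
rewrite (smulv_smul i.+1 (i.+1 + c)) => [|k|k j ki icj]; last 2 first.
- exact: lower_tri_S1_of.
- by rewrite spow_sLamE (_ : (k + c == j)%N = false) //; apply/negbTE; lia.
have -> : smulv (spow (sLam C) c) (fun k => 'X^k) = fun k => 'X^(k + c).
  by apply/funext => k; rewrite smulv_spow_sLam.
exact: smulv_S1_of_shiftX.
Qed.

Lemma smulv_trS2_shift_inverse c p q (h hq : nat -> C) S2 i :
  (forall j, size (p j) <= j.+1)%N -> (forall j, size (q j) <= j.+1)%N ->
  upper_tri S2 -> smul (S2inv_of p h) S2 = sid C ->
  smulv (strT (smul (smul S2 (strT (spow (sLam C) c))) (S2inv_of q hq)))
        (fun j => (h j)^-1 *: p j) i = 'X^c * ((hq i)^-1 *: q i).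
Proof.
move=> sp sq uS2 pS2; set w := fun j => _ *: p j.
have sw j : (size (w j) <= j.+1)%N by apply: leq_trans (size_scale_leq _ _) (sp j).
have shq j : (size ((hq j)^-1 *: q j) <= j.+1)%N.
  by apply: leq_trans (size_scale_leq _ _) (sq j).
have lS2 : lower_tri (strT S2) by move=> j k jk; apply: uS2.
have wS2 : smul (strT S2) (S1_of w) = sid C.
  by rewrite -strT_S2inv_of -strT_smul pS2 strT_sid.
rewrite !strT_smul strT_S2inv_of [strT (strT _)]/strT.
rewrite (smulv_smul i.+1 (i.+1 + c)) => [|k|k j ki icj]; last 2 first.
- exact: lower_tri_S1_of.
- by rewrite smul_spow_sLamE lS2 //; lia.
have -> : smulv (smul (spow (sLam C) c) (strT S2)) w = fun k => 'X^(k + c).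
  apply/funext => k; rewrite smulv_smul_spow_sLam.
  exact: smulv_S1_of_inverse.
exact: smulv_S1_of_shiftX.
Qed.

End SemiInfiniteAction.

Close Scope classical_set_scope.

Theorem corollary2p1 (R : realType) (a b : nat) (mu : smx R[i])
  (p1 p2 hp1 hp2 : nat -> {poly R[i]}) (h hh : nat -> R[i])
  (hS1inv S2 A B : smx R[i]) :
  (1 <= a)%N -> (1 <= b)%N ->
  (* periodicity of the moment matrix *)
  (forall i j, mu (i + a)%N (j + b)%N = mu i j) ->
  (* monic polynomials of degree j *)
  (forall j, monic_deg (p1 j) j) -> (forall j, monic_deg (p2 j) j) ->
  (forall j, monic_deg (hp1 j) j) -> (forall j, monic_deg (hp2 j) j) ->
  (* nonzero norms *)
  (forall j, h j != 0) -> (forall j, hh j != 0) ->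
  (* bi-orthogonality w.r.t. mu and mu-hat, mu-hat_{ij} = mu_{i,j+b} *)
  (forall i j, bform mu (p1 i) (p2 j) = (i == j)%:R * h i) ->
  (forall i j, bform (fun k l => mu k (l + b)%N) (hp1 i) (hp2 j)
                 = (i == j)%:R * hh i) ->
  (* hS1inv is the (lower triangular) inverse of S-hat_1 *)
  lower_tri hS1inv ->
  smul (S1_of hp1) hS1inv = sid _ -> smul hS1inv (S1_of hp1) = sid _ ->
  (* S2 is the (upper triangular) matrix whose inverse is S_2^{-1} *)
  upper_tri S2 ->
  smul S2 (S2inv_of p2 h) = sid _ -> smul (S2inv_of p2 h) S2 = sid _ ->
  (* A := S1 Lambda^a S-hat_1^{-1} = S2 S-hat_2^{-1} *)
  A = smul (smul (S1_of p1) (spow (sLam _) a)) hS1inv ->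
  A = smul S2 (S2inv_of hp2 hh) ->
  (* B := S1 S-hat_1^{-1} = S2 Lambda^{-b} S-hat_2^{-1} *)
  B = smul (S1_of p1) hS1inv ->
  B = smul (smul S2 (strT (spow (sLam _) b))) (S2inv_of hp2 hh) ->
  (forall i, smulv A hp1 i = 'X^a * smulv B hp1 i) /\
  (forall i, smulv (strT B) (fun j => (h j)^-1 *: p2 j) i
             = 'X^b * smulv (strT A) (fun j => (h j)^-1 *: p2 j) i).
Proof.
move=> _ _ _ mp1 mp2 mhp1 mhp2 _ _ _ _ lS1inv _ S1invS1 uS2 _ S2invS2 A1 A2 B1 B2.
have size_le (q : nat -> {poly R[i]}) :
    (forall j, monic_deg (q j) j) -> forall j, (size (q j) <= j.+1)%N.
  by move=> mq j; case: (mq j) => _ ->.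
have B1' : B = smul (smul (S1_of p1) (spow (sLam _) 0)) hS1inv by rewrite smul_sid.
have A2' : A = smul (smul S2 (strT (spow (sLam _) 0))) (S2inv_of hp2 hh).
  by rewrite strT_sid smul_sid.
split=> i.
  by rewrite A1 B1' !smulv_S1_shift_inverse ?expr0 ?mul1r //; apply: size_le.
by rewrite B2 A2' !smulv_trS2_shift_inverse ?expr0 ?mul1r //; apply: size_le.
Qed.
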